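(* Let $K$ be a field, $\Lambda=\mathrm{diag}(a_1,\dots,a_n)$, $P=(p_{st})\in GL_n(K)$, $A=P^{-1}\Lambda P$, and $B=\mathrm{diag}(b_1,\dots,b_n)$, with all $a_i,b_i\in K$. Then $$T(A,B)=(-1)^{\lfloor n/2\rfloor}\,\delta(a_1,\dots,a_n)^n\,\delta(b_1,\dots,b_n)^n\,\frac{1}{(\det P)^n}\prod_{s=1}^n\prod_{t=1}^n p_{st}.$$
   Context: $M(A,B)\in M_{n^2}(K)$ is the block matrix of $n\times n$ blocks whose $(i,j)$-th block is $A^{j-1}B^{i-1}$ ($i,j=1,\dots,n$), and $T(A,B)=\det M(A,B)$. $\delta(x_1,\dots,x_n)=\prod_{s<t}(x_t-x_s)$. *)

From HB Require Import structures.
From mathcomp Require Import all_boot all_order all_algebra.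
Set Implicit Arguments. Unset Strict Implicit. Unset Printing Implicit Defensive.
Import Order.TTheory GRing.Theory Num.Theory.
Local Open Scope ring_scope.

(* Index r : 'I_(n*n) encodes the pair (r %/ n, r %% n): block index r %/ n,
   position inside the block r %% n (0-based). *)
Lemma blk_div_lt (n : nat) (r : 'I_(n * n)) : (r %/ n < n)%N.
Proof.
case: n r => [|n] r; first by case: r.
by rewrite ltn_divLR // ltn_ord.
Qed.

Lemma blk_mod_lt (n : nat) (r : 'I_(n * n)) : (r %% n < n)%N.
Proof.
case: n r => [|n] r; first by case: r.
by rewrite ltn_pmod.
Qed.

Definition blk (n : nat) (r : 'I_(n * n)) : 'I_n := Ordinal (blk_div_lt r).
Definition pos (n : nat) (r : 'I_(n * n)) : 'I_n := Ordinal (blk_mod_lt r).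

(* M(A,B): the n x n block matrix whose (i,j)-th block (1-based) is A^(j-1) B^(i-1);
   0-based: block (i,j) is A^j B^i. *)
Definition Mblock (K : fieldType) (n : nat) (A B : 'M[K]_n) : 'M[K]_(n * n) :=
  \matrix_(r, c) (A ^+ blk c *m B ^+ blk r) (pos r) (pos c).

Definition T (K : fieldType) (n : nat) (A B : 'M[K]_n) : K := \det (Mblock A B).

Definition delta (K : fieldType) (n : nat) (x : 'I_n -> K) : K :=
  \prod_(s < n) \prod_(t < n | (s < t)%N) (x t - x s).

From HB Require Import structures.
From mathcomp Require Import all_boot all_order all_algebra perm.
From mathcomp.real_closed Require Import mxtens.
From mathcomp Require Import ring.
Import GRing.Theory.
Local Open Scope ring_scope.

(* Write Q = P^-1.  Entrywise, the (p,q) entry of the block A^j B^i is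
   sum_k Q_pk a_k^j P_kq b_q^i, so M(A,B) factors through the index pairs (k,q):
   M(A,B) = (Z (x) Q) S * D * (W (x) I), where Z, W are the Vandermonde matrices of
   b and a (W transposed), D = diag(P_kq), and S permutes (q,k) to (k,q).
   Since det(X (x) Y) = det X^n det Y^n for n x n matrices, and the swap S is a
   product of C(n,2) transpositions, whose parity is that of n/2, the formula follows. *)


Lemma big_mxtens_index {R : Type} {idx : R} (op : Monoid.com_law idx) m n
    (F : 'I_(m * n) -> R) :
  \big[op/idx]_(r < m * n) F r =
  \big[op/idx]_(i < m) \big[op/idx]_(j < n) F (mxtens_index (i, j)).
Proof.
rewrite pair_big (reindex (@mxtens_index m n)) /=; last first.
  by exists (@mxtens_unindex m n) => r _; rewrite (mxtens_indexK, mxtens_unindexK).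
by apply: eq_bigr => -[i j].
Qed.

Lemma odd_bin2 n : odd 'C(n, 2) = odd n./2.
Proof.
elim/ltn_ind: n => -[|[|n]] // IH.
rewrite !binS bin0 bin1 !oddD IH //=.
by case: (odd n); case: (odd n./2).
Qed.

Lemma sum_ltn_ord n (j : 'I_n) : (\sum_(i < n) (i < j : nat))%N = j.
Proof.
rewrite -(big_mkord xpredT (fun i => (i < j : nat))) (big_cat_nat (n := j)) /=;
  [|exact: leq0n|exact: ltnW].
rewrite [X in (_ + X)%N]big1_seq ?addn0; last first.
  by move=> i /andP[_]; rewrite mem_index_iota => /andP[ji _]; rewrite ltnNge ji.
rewrite (eq_big_seq (fun _ => 1%N)); last by move=> i; rewrite mem_index_iota => /andP[_ ->].
by rewrite sum_nat_const_nat muln1 subn0.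
Qed.

Lemma sum_ltn_pairs n : (\sum_(i < n) \sum_(j < n) (i < j : nat))%N = 'C(n, 2).
Proof.
rewrite exchange_big /= -bin2_sum big_mkord.
by apply: eq_bigr => j _; exact: sum_ltn_ord.
Qed.

Lemma prod_disjoint_tpermE (T : finType) (f : T -> T) (S : seq T) :
    uniq (S ++ map f S) -> {in S, forall x, f (f x) = x} ->
  forall y, (\prod_(x <- S) tperm x (f x))%g y = if y \in S ++ map f S then f y else y.
Proof.
elim: S => [|a S IH] /= uniqS fK y; first by rewrite big_nil perm1.
have faS : perm_eq (S ++ f a :: map f S) (f a :: S ++ map f S).
  by rewrite (perm_catCA S [:: f a]).
move: uniqS; rewrite (perm_uniq faS) -[a :: _ ++ _]/(a :: (_ ++ _)) /=.
rewrite (perm_mem faS) inE negb_or => /and3P[/andP[aNfa aNS] faNS uniqS].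
rewrite big_cons permM IH // => [|x xS]; last by rewrite fK // mem_behead.
rewrite !in_cons (perm_mem faS) in_cons.
case: (tpermP a (f a) y) => [->|->|/eqP/negbTE-> /eqP/negbTE->] //.
- by rewrite (negbTE faNS) eqxx.
- by rewrite (negbTE aNS) eqxx orbT fK ?mem_head.
Qed.

Section MxtensSwap.

Variable n : nat.

Definition mxtens_swap_index (r : 'I_(n * n)) : 'I_(n * n) :=
  mxtens_index ((mxtens_unindex r).2, (mxtens_unindex r).1).

Lemma mxtens_swap_indexE i j :
  mxtens_swap_index (mxtens_index (i, j)) = mxtens_index (j, i).
Proof. by rewrite /mxtens_swap_index mxtens_indexK. Qed.

Lemma mxtens_swap_indexK : involutive mxtens_swap_index.
Proof. by move=> r; case: (mxtens_indexP r) => i j; rewrite !mxtens_swap_indexE. Qed.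

Definition mxtens_swap : 'S_(n * n) := perm (can_inj mxtens_swap_indexK).

Lemma mxtens_swapE i j : mxtens_swap (mxtens_index (i, j)) = mxtens_index (j, i).
Proof. by rewrite permE mxtens_swap_indexE. Qed.

(* The swap is the product of the transpositions (i,j) <-> (j,i) over all i < j. *)
Lemma odd_mxtens_swap : odd_perm mxtens_swap = odd n./2.
Proof.
pose lt_idx (r : 'I_(n * n)) := ((mxtens_unindex r).1 < (mxtens_unindex r).2)%N.
pose S := [seq r <- enum 'I_(n * n) | lt_idx r].
have memS i j : (mxtens_index (i, j) \in S) = (i < j)%N.
  by rewrite mem_filter mem_enum andbT /lt_idx mxtens_indexK.
have memSswap i j : (mxtens_index (i, j) \in map mxtens_swap_index S) = (j < i)%N.
  by rewrite -mxtens_swap_indexE (mem_map (can_inj mxtens_swap_indexK)) memS.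
have uniqS : uniq (S ++ map mxtens_swap_index S).
  have uniqS : uniq S by rewrite filter_uniq ?enum_uniq.
  rewrite cat_uniq (map_inj_uniq (can_inj mxtens_swap_indexK)) uniqS andbT /=.
  apply/hasPn => r; case: (mxtens_indexP r) => i j.
  by rewrite memSswap memS => /ltnW; rewrite leqNgt.
have swapS : mxtens_swap = (\prod_(r <- S) tperm r (mxtens_swap_index r))%g.
  apply/permP => r; rewrite prod_disjoint_tpermE //; last by move=> ? _; rewrite mxtens_swap_indexK.
  case: (mxtens_indexP r) => i j; rewrite mxtens_swapE mxtens_swap_indexE mem_cat memS memSswap.
  by case: (eqVneq i j) => [->|]; [case: ifP | rewrite -val_eqE neq_ltn => ->].
rewrite swapS -(big_map (fun r => (r, mxtens_swap_index r)) xpredT (fun t => tperm t.1 t.2)).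
rewrite odd_perm_prod; last first.
  apply/allP => _ /mapP[r rS ->]; move: rS; case: (mxtens_indexP r) => i j.
  rewrite memS /dpair /= mxtens_swap_indexE => ij.
  by apply: contraTneq ij => /(can_inj (@mxtens_indexK n n)) [->]; rewrite ltnn.
rewrite size_map size_filter -sum1_count big_mkcond big_enum /= big_mxtens_index -odd_bin2.
rewrite -sum_ltn_pairs; congr odd; apply: eq_bigr => i _; apply: eq_bigr => j _.
by rewrite /lt_idx mxtens_indexK; case: (i < j)%N.
Qed.

End MxtensSwap.

Lemma det_castmx (R : comPzRingType) m m' (e : m = m') (A : 'M[R]_m) :
  \det (castmx (e, e) A) = \det A.
Proof. by case: m' / e; rewrite castmx_id. Qed.

Lemma det_row_col_perm (R : comPzRingType) n (s : 'S_n) (A : 'M[R]_n) :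
  \det (row_perm s (col_perm s A)) = \det A.
Proof.
rewrite row_permE col_permE !det_mulmx !det_perm odd_permV.
by rewrite mulrCA -exprD -signr_odd oddD addbb mulr1.
Qed.

Lemma det_tens1mx (R : comPzRingType) m n (B : 'M[R]_n) :
  \det ((1%:M : 'M[R]_m) *t B) = \det B ^+ m.
Proof.
elim: m => [|m IH]; first by rewrite det_mx00.
rewrite (@scalar_mx_block R 1 m) tens_block_mx !tens0mx det_castmx det_ublock.
by rewrite IH tens_scalar1mx det_castmx exprS.
Qed.

Lemma tensmx_swap (R : comPzRingType) n (A B : 'M[R]_n) :
  row_perm (mxtens_swap n) (col_perm (mxtens_swap n) (A *t B)) = B *t A.
Proof.
apply/matrixP => r c; case: (mxtens_indexP r) => i p; case: (mxtens_indexP c) => j q.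
by rewrite !mxE !mxtens_swapE !mxtens_indexK mulrC.
Qed.

Lemma det_tensmx (R : comPzRingType) n (A B : 'M[R]_n) :
  \det (A *t B) = \det A ^+ n * \det B ^+ n.
Proof.
rewrite tensmx_decr det_mulmx -tensmx_swap det_row_col_perm.
by rewrite !det_tens1mx.
Qed.

Lemma diag_mx_expr (R : pzRingType) n (d : 'rV[R]_n) k :
  diag_mx d ^+ k = diag_mx (map_mx (fun x => x ^+ k) d).
Proof.
elim: k => [|k IH]; first by apply/matrixP => i j; rewrite !mxE.
rewrite exprS IH -mulmxE mul_diag_mx; apply/matrixP => i j.
by rewrite !mxE mulrnAr exprS.
Qed.

Lemma expr_conjmx (K : fieldType) n (P L : 'M[K]_n) k : P \in unitmx ->
  (invmx P *m L *m P) ^+ k = invmx P *m L ^+ k *m P.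
Proof.
move=> unitP; elim: k => [|k IH]; first by rewrite !expr0 mulmx1 mulVmx.
by rewrite exprS IH -!mulmxE !mulmxA mulmxK // exprS -mulmxE !mulmxA.
Qed.

Definition mxtens_diag {R : pzRingType} {m n} (A : 'M[R]_(m, n)) : 'M[R]_(m * n) :=
  diag_mx (\row_r A (mxtens_unindex r).1 (mxtens_unindex r).2).

Lemma det_mxtens_diag (R : comPzRingType) m n (A : 'M[R]_(m, n)) :
  \det (mxtens_diag A) = \prod_i \prod_j A i j.
Proof.
rewrite det_diag big_mxtens_index.
by apply: eq_bigr => i _; apply: eq_bigr => j _; rewrite mxE mxtens_indexK.
Qed.

Lemma MblockE (K : fieldType) n (A B : 'M[K]_n) i p j q :
  Mblock A B (mxtens_index (i, p)) (mxtens_index (j, q)) = (A ^+ j *m B ^+ i) p q.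
Proof.
have blkE r : blk r = (mxtens_unindex r).1 by apply: val_inj.
have posE r : pos r = (mxtens_unindex r).2 by apply: val_inj.
by rewrite mxE !blkE !posE !mxtens_indexK.
Qed.

Lemma Mblock_conj_diag (K : fieldType) n (a b : 'I_n -> K) (P : 'M[K]_n) :
    P \in unitmx ->
  Mblock (invmx P *m diag_mx (\row_i a i) *m P) (diag_mx (\row_i b i)) =
  col_perm (mxtens_swap n) (Vandermonde n (\row_i b i) *t invmx P) *m mxtens_diag P *m
    ((Vandermonde n (\row_i a i))^T *t 1%:M).
Proof.
move=> unitP; apply/matrixP => r c.
case: (mxtens_indexP r) => i p; case: (mxtens_indexP c) => j q.
rewrite MblockE expr_conjmx // !diag_mx_expr mul_mx_diag mxE [RHS]mxE big_mxtens_index.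
rewrite [in LHS]mxE mulr_suml; apply: eq_bigr => k _.
rewrite (bigD1 q) //= big1 ?addr0; last first.
  by move=> q' q'Nq; rewrite tensmxE [1%:M q' q]mxE (negbTE q'Nq) !mulr0.
rewrite /mxtens_diag !mul_mx_diag tensmxE !mxE mxtens_swapE !mxtens_indexK /= eqxx mulr1.
by rewrite mulrC -!mulrA [a k ^+ j * _]mulrC.
Qed.

Lemma det_Vandermonde_delta (K : fieldType) n (a : 'I_n -> K) :
  \det (Vandermonde n (\row_i a i)) = delta a.
Proof.
rewrite det_Vandermonde; apply: eq_bigr => i _; apply: eq_bigr => j _.
by rewrite !mxE.
Qed.

Theorem mainTheorem5 (K : fieldType) (n : nat) (a b : 'I_n -> K) (P : 'M[K]_n) :
  P \in unitmx ->
  T (invmx P *m diag_mx (\row_i a i) *m P) (diag_mx (\row_i b i)) =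
  (-1) ^+ (n./2) * delta a ^+ n * delta b ^+ n * ((\det P) ^+ n)^-1 *
  \prod_(s < n) \prod_(t < n) P s t.
Proof.
move=> unitP; rewrite /T Mblock_conj_diag // !det_mulmx col_permE det_mulmx det_perm.
rewrite odd_permV odd_mxtens_swap signr_odd det_mxtens_diag !det_tensmx det_tr.
rewrite !det_Vandermonde_delta det1 expr1n mulr1 det_inv exprVn.
ring.
Qed.
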